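(* Let $\alpha$, $\beta$ be sequences and $i\in\{1,\dots,m\}$ such that $\alpha+[i]+\beta$ is an increasing sequence in $\{1,\dots,m\}$. For every $a\in\mathcal{S}_{\alpha+\beta}$, $$\operatorname{eval}_{\alpha+[i]+\beta}(\Uparrow_i a) = \Uparrow_i\big(\operatorname{eval}_{\alpha+\beta}(a)\big),$$ where on the left $\Uparrow_i$ is nested stream replication and on the right it is variable replication.
   Context: Fix a semiring $R$ (commutative additive monoid with $0$, multiplicative monoid with $1$, two-sided distributivity, $0\cdot x=x\cdot0=0$), an integer $m\ge1$ and finite nonempty totally ordered sets $I_1,\dots,I_m$. For an increasing sequence $\alpha=[i_1<\dots<i_n]$ in $\{1,\dots,m\}$, $I_\alpha=I_{i_1}\times\dots\times I_{i_n}$ and $\mathcal{T}_\alpha$ is the set of functions $I_\alpha\to R$ (pointwise semiring; $\mathcal{T}_{[]}=R$), with $\mathcal{T}_{i::\alpha}$ identified with functions $I_i\to\mathcal{T}_\alpha$ by currying. $i::\alpha$ is the sequence with head $i$ and tail $\alpha$; $+$ is concatenation. Variable replication: for $V\in\mathcal{T}_{\alpha+\beta}$, $\Uparrow_i V\in\mathcal{T}_{\alpha+[i]+\beta}$ is $(\Uparrow_i V)(x)=V(\pi(x))$ where $\pi$ deletes the $I_i$-coordinate. An indexed stream of type $I\to V$ is a tuple $(S,q,\iota,\nu,\mathrm{ready},\delta)$: state space $S$, current state $q$, $\iota:S\to I$, $\nu:S\to V$, $\mathrm{ready}:S\to\{\bot,\top\}$, $\delta:S\to S$; ''the stream $r$''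 is the same tuple with current state $r$. $r$ is reachable from $q$ if $r=\delta^k(q)$, $k\ge0$; terminal if $\delta(r)=r$. $q$ is simple if: (Finite) some reachable state is terminal and every reachable terminal $t$ has $\mathrm{ready}(t)=\bot$; (Monotonic) $\iota(r)\le\iota(\delta(r))$ for reachable $r$; (Reduced) if $r$ reachable from $q$, $s$ reachable from $r$, both ready and $\iota(r)=\iota(s)$, then $r=s$. For $x\in I$ and $w$ in a commutative monoid $M$, $(x\mapsto w)$ is $w$ at $x$ and $0$ elsewhere. For a stream $q$ with finitely many reachable states and $g:V\to M$, $\llbracket q\rrbracket_g=\sum_{r\text{ reachable from }q,\ \mathrm{ready}(r)=\top}(\iota(r)\mapsto g(\nu(r)))$ (sum over the set of reachable states). Nested streams: $\mathcal{S}_{[]}=R$; $\mathcal{S}_{i::\alpha}$ = simple streams of type $I_i\to\mathcal{S}_\alpha$. $\operatorname{eval}_{[]}(q)=q$, $\operatorname{eval}_{i::\alpha}(q)=\llbracket q\rrbracket_{\operatorname{eval}_\alpha}\in\mathcal{T}_{i::\alpha}$. Constant stream: with $k=|I_i|$ and $e:\{1..k\}\to I_i$ the order-preserving bijection, $\Uparrow(v)$ has states $\{1,\dots,k+1\}$, current state $1$, $\iota(r)=e(r)$ ($r\le k$), $\iota(k+1)=e(k)$, $\nu(r)=v$, $\mathrm{ready}(r)=\top$ iff $r\le k$, $\delta(r)=\min(r+1,k+1)$. Stream map: $\operatorname{map}_j f\;(S,q,\iota,\nu,\mathrm{ready},\delta)=(S,q,\iota,f\circ\nu,\mathrm{ready},\delta)$;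 $\operatorname{map}_{[]}f=f$, $\operatorname{map}_{j::\gamma}f=\operatorname{map}_j(\operatorname{map}_\gamma f)$. Nested replication: $\Uparrow_i:=\operatorname{map}_\alpha(\Uparrow):\mathcal{S}_{\alpha+\beta}\to\mathcal{S}_{\alpha+[i]+\beta}$, with $\Uparrow$ applied to values in $\mathcal{S}_\beta$. *)

From HB Require Import structures.
From mathcomp Require Import all_boot all_order all_algebra.
From mathcomp Require Import boolp classical_sets fsbigop.
From mathcomp Require Import zify.
Set Implicit Arguments. Unset Strict Implicit. Unset Printing Implicit Defensive.
Import Order.TTheory GRing.Theory.
Local Open Scope order_scope.

Record stream (I V : Type) := Stream {
  state : Type;
  cur   : state;
  iota  : state -> I;
  nu    : state -> V;
  ready : state -> bool;
  delta : state -> state }.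
Arguments Stream {I V}.

Definition reach I V (s : stream I V) (q r : state s) : Prop :=
  exists k : nat, r = iter k (@delta _ _ s) q.

Definition terminal I V (s : stream I V) (r : state s) : Prop := delta r = r.

Definition simple (d : Order.disp_t) (I : porderType d) V (s : stream I V) : Prop :=
  ((exists t, reach (cur s) t /\ terminal t) /\
   (forall t, reach (cur s) t -> terminal t -> ready t = false)) /\
  (forall r, reach (cur s) r -> iota r <= iota (delta r)) /\
  (forall r t, reach (cur s) r -> reach r t -> ready r -> ready t ->
     iota r = iota t -> r = t).

Definition sem (I : eqType) V (M : nmodType) (s : stream I V) (g : V -> M)
    (x : I) : M :=
  (\sum_(r \in [set r : {classic (state s)} | reach (cur s) r /\ ready r])
     (if iota r == x then g (nu r) else 0))%R.

Definition smap I V W (f : V -> W) (s : stream I V) : stream I W :=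
  Stream (state s) (cur s) (@iota _ _ s) (f \o @nu _ _ s)
         (@ready _ _ s) (@delta _ _ s).

Lemma simple_smap d (I : porderType d) V W (f : V -> W) (s : stream I V) :
  simple s -> simple (smap f s).
Proof. by []. Qed.

(* states {0,..,k} (0-based copy of {1,..,k+1}), k = |T|                      *)
Definition ccard d (T : finTBOrderType d) : nat := #|T|.

Definition cenum d (T : finTBOrderType d) (n : nat) : T :=
  match @insub _ (fun m => m < (ccard T))%N _ n with
  | Some o => Order.enum_val (A := predT) o
  | None => \bot
  end.

Definition const_stream d (T : finTBOrderType d) V (v : V) : stream T V :=
  @Stream T V 'I_(ccard T).+1 ord0
    (fun r => cenum T (minn r (ccard T).-1))
    (fun _ => v)
    (fun r => (r < (ccard T))%N)
    (fun r => inord (minn r.+1 (ccard T))).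

Lemma cenum_le d (T : finTBOrderType d) (m n : nat) :
  (m <= n)%N -> (n < (ccard T))%N -> cenum T m <= cenum T n.
Proof.
move=> mn nT; have mT : (m < (ccard T))%N by apply: leq_ltn_trans nT.
rewrite /cenum insubT insubT.
have H := @Order.le_enum_val d T (@le_total _ T) predT.
have := H (Sub m mT) (Sub n nT). move=> E. rewrite [_ <= _]E. by [].
Qed.

Lemma cenum_inj d (T : finTBOrderType d) (m n : nat) :
  (m < (ccard T))%N -> (n < (ccard T))%N -> cenum T m = cenum T n -> m = n.
Proof.
move=> mT nT; rewrite /cenum insubT insubT => E.
have H := @Order.le_enum_val d T (@le_total _ T) predT.
have h1 := H (Sub m mT) (Sub n nT); have h2 := H (Sub n nT) (Sub m mT).
rewrite E lexx in h1 h2.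
apply/eqP; rewrite eqn_leq; apply/andP; split.
  by move: h1 => /esym; exact.
by move: h2 => /esym; exact.
Qed.

Lemma const_iter d (T : finTBOrderType d) V (v : V) (r : state (const_stream T v)) n :
  val (iter n (@delta _ _ (const_stream T v)) r) = minn (r + n) (ccard T).
Proof.
have rT : (r <= (ccard T))%N by rewrite -ltnS ltn_ord.
elim: n => [|n IH] /=; first by rewrite addn0; apply/esym/minn_idPl.
rewrite inordK; last by rewrite ltnS geq_minr.
rewrite IH. move: (ccard T) (nat_of_ord r) => K R0. lia.
Qed.

Lemma simple_const d (T : finTBOrderType d) V (v : V) : simple (const_stream T v).
Proof.
have T0 : (0 < (ccard T))%N by apply/card_gt0P; exists \bot.
have ordle : forall t : state (const_stream T v), (nat_of_ord t <= (ccard T))%N.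
  by move=> t; have := ltn_ord t; rewrite ltnS.
split; [split|split].
- exists ord_max; split.
    exists (ccard T); apply: val_inj; rewrite const_iter /=; lia.
  apply: val_inj => /=; rewrite inordK; last by rewrite ltnS geq_minr.
  lia.
- move=> t _ /(congr1 val) /=; rewrite inordK; last by rewrite ltnS geq_minr.
  move=> h; apply/negbTE; have := ordle t; lia.
- move=> r _ /=; apply: cenum_le; last by lia.
  rewrite inordK; last by rewrite ltnS geq_minr.
  have := ordle r; lia.
- move=> r t _ _ /= rr tr /cenum_inj.
  have E1 : minn r (ccard T).-1 = r by lia.
  have E2 : minn t (ccard T).-1 = t by lia.
  rewrite E1 E2 => h; apply: val_inj; apply: h; lia.
Qed.

Fixpoint Idx (disp : Order.disp_t) (I : nat -> finTBOrderType disp)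
    (al : seq nat) : Type :=
  match al with
  | [::] => unit
  | j :: a => (I j * Idx I a)%type
  end.

Definition Ten (R : pzSemiRingType) disp (I : nat -> finTBOrderType disp)
    (al : seq nat) : Type := Idx I al -> R.

Fixpoint proj disp (I : nat -> finTBOrderType disp) (be : seq nat) (i : nat)
    (al : seq nat) : Idx I (al ++ i :: be) -> Idx I (al ++ be) :=
  match al return Idx I (al ++ i :: be) -> Idx I (al ++ be) with
  | [::] => fun x => x.2
  | j :: a => fun x => (x.1, @proj disp I be i a x.2)
  end.
Arguments proj {disp I} be i al.

Definition repT (R : pzSemiRingType) disp (I : nat -> finTBOrderType disp)
    (al be : seq nat) (i : nat) (V : Ten R I (al ++ be)) : Ten R I (al ++ i :: be) :=
  fun x => V (proj be i al x).

Fixpoint NS (R : pzSemiRingType) disp (I : nat -> finTBOrderType disp)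
    (al : seq nat) : Type :=
  match al with
  | [::] => R
  | j :: a => {s : stream (I j) (NS R I a) | simple s}
  end.

(* eval_[] q = q ;  eval_{j::a} q = [[q]]_{eval_a}  (curried: the value at
   (x, y) in I_j x I_a is ([[q]]_{eval_a} x) y, computed pointwise in R) *)
Fixpoint eval (R : pzSemiRingType) disp (I : nat -> finTBOrderType disp)
    (al : seq nat) : NS R I al -> Ten R I al :=
  match al return NS R I al -> Ten R I al with
  | [::] => fun q _ => q
  | j :: a => fun q x => sem (sval q) (fun v => eval v x.2) x.1
  end.

Definition smapS (R : pzSemiRingType) disp (I : nat -> finTBOrderType disp)
    (j : nat) (a b : seq nat) (f : NS R I a -> NS R I b)
    (s : NS R I (j :: a)) : NS R I (j :: b) :=
  exist _ (smap f (sval s)) (simple_smap f (proj2_sig s)).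

Fixpoint nmap (R : pzSemiRingType) disp (I : nat -> finTBOrderType disp)
    (be be' : seq nat) (f : NS R I be -> NS R I be') (ga : seq nat) :
    NS R I (ga ++ be) -> NS R I (ga ++ be') :=
  match ga return NS R I (ga ++ be) -> NS R I (ga ++ be') with
  | [::] => f
  | j :: g => smapS (@nmap R disp I be be' f g)
  end.
Arguments nmap {R disp I be be'} f ga.

Definition cstream (R : pzSemiRingType) disp (I : nat -> finTBOrderType disp)
    (i : nat) (be : seq nat) (v : NS R I be) : NS R I (i :: be) :=
  exist _ (const_stream (I i) v) (simple_const (I i) v).

Definition nrep (R : pzSemiRingType) disp (I : nat -> finTBOrderType disp)
    (al be : seq nat) (i : nat) : NS R I (al ++ be) -> NS R I (al ++ i :: be) :=
  nmap (@cstream R disp I i be) al.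
Arguments nrep {R disp I} al be i.
Arguments repT {R disp I} al be i.
Arguments eval {R disp I al}.

(** Replication commutes with evaluation by induction on [al]: mapping over the
    outer levels of a nested stream only post-composes the value function, so
    evaluation passes through it, and at the innermost level the constant
    stream has exactly one ready state per point of [I i], carrying the
    replicated value. *)
From Pilot Require Import Defs.
From HB Require Import structures.
From mathcomp Require Import all_boot all_order all_algebra.
From mathcomp Require Import boolp classical_sets fsbigop zify.
Set Implicit Arguments. Unset Strict Implicit. Unset Printing Implicit Defensive.
Import Order.TTheory GRing.Theory.

Lemma cenum_enum_rank d (T : finTBOrderType d) (x : T) :
  cenum T (Order.enum_rank x) = x.
Proof.
rewrite /cenum insubT => [|rx]; first exact: ltn_ord.
have -> : Sub (val (Order.enum_rank x)) rx = Order.enum_rank x by exact: val_inj.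
exact: Order.enum_rankK.
Qed.

Section ConstStream.
Variables (d : Order.disp_t) (T : finTBOrderType d) (V : Type) (v : V).

Lemma reach_const_stream (r : state (const_stream T v)) :
  reach (cur (const_stream T v)) r.
Proof.
exists (val r); apply: val_inj; rewrite const_iter /=.
by have := ltn_ord r; lia.
Qed.

Lemma iota_const_stream_ready (r : state (const_stream T v)) :
  (r < ccard T)%N -> Defs.iota r = cenum T r.
Proof. by move=> rT /=; congr cenum; lia. Qed.

(* The unique ready state sitting over [x] is the rank of [x] in [T]. *)
Lemma sem_const_stream (M : nmodType) (g : V -> M) (x : T) :
  sem (const_stream T v) g x = g v.
Proof.
set n := val (Order.enum_rank x).
have nT : (n < ccard T)%N by exact: ltn_ord.
pose r0 : state (const_stream T v) := inord n.
have r0n : val r0 = n by apply: inordK; rewrite ltnS ltnW.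
rewrite /sem -(fsbig_widen [set (r0 : {classic (state (const_stream T v))})]).
- by rewrite fsbig_set1 iota_const_stream_ready r0n ?cenum_enum_rank ?eqxx.
- by move=> r /= ->; split; [exact: reach_const_stream | rewrite /= r0n].
move=> r /= [[_ rT] r_r0]; case: eqP => // rx; exfalso; apply: r_r0.
apply/val_inj; rewrite r0n; apply: (cenum_inj rT nT).
by rewrite -(iota_const_stream_ready rT) /= rx cenum_enum_rank.
Qed.

End ConstStream.

Lemma sem_smap (I : eqType) V W (M : nmodType) (f : V -> W) (s : stream I V)
    (g : W -> M) (x : I) :
  sem (smap f s) g x = sem s (g \o f) x.
Proof. by []. Qed.

Lemma eval_nrep (R : pzSemiRingType) disp (I : nat -> finTBOrderType disp)
    (al be : seq nat) (i : nat) (a : NS R I (al ++ be)) :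
  eval (nrep al be i a) = repT al be i (eval a).
Proof.
elim: al a => [|j al IH] a; apply: funext => x.
  by rewrite /= sem_const_stream.
rewrite /= sem_smap /repT /=; congr sem; apply: funext => v.
by rewrite /= IH.
Qed.

Theorem mainTheorem4 (R : pzSemiRingType) (disp : Order.disp_t) (m : nat)
    (I : nat -> finTBOrderType disp) (al be : seq nat) (i : nat) :
  (1 <= m)%N ->
  sorted ltn (al ++ i :: be) ->
  all (fun j => (1 <= j <= m)%N) (al ++ i :: be) ->
  forall a : NS R I (al ++ be),
    eval (nrep al be i a) = repT al be i (eval a).
Proof. by move=> _ _ _ a; exact: eval_nrep. Qed.
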